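(* There exists a (greedy) algorithm which, given any Hierarchical Correlation Clustering instance on $n$ data points, returns an HC tree $T_1$ satisfying \[hcc_G(T_1)\ge \tfrac13(n-2)\sum_{i<j}w^s_{ij}+\tfrac23 n\sum_{i<j}w^d_{ij}.\]
   Context: An HC tree on $V$ ($|V|=n$) is a rooted tree whose leaves are in bijection with $V$; $|T_{ij}|$ is the number of leaves of the subtree rooted at the lowest common ancestor of $i$ and $j$. Each pair $i<j$ has a similarity weight $w^s_{ij}\ge0$ and a dissimilarity weight $w^d_{ij}\ge0$, and $hcc_G(T)=\sum_{i<j}w^s_{ij}(n-|T_{ij}|)+\sum_{i<j}w^d_{ij}|T_{ij}|$. *)

From HB Require Import structures.
From mathcomp Require Import all_boot all_order all_algebra.
Set Implicit Arguments. Unset Strict Implicit. Unset Printing Implicit Defensive.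
Import Order.TTheory GRing.Theory Num.Theory.

Inductive hctree (n : nat) : Type :=
| Leaf of 'I_n
| Node of seq (hctree n).

Arguments Leaf {n}.
Arguments Node {n}.

Fixpoint leaves n (t : hctree n) : seq 'I_n :=
  match t with
  | Leaf v => [:: v]
  | Node cs => flatten (map (@leaves n) cs)
  end.

(* every internal node has at least one child (so leaves of the tree are
   exactly the Leaf constructors) *)
Fixpoint no_empty_node n (t : hctree n) : bool :=
  match t with
  | Leaf _ => true
  | Node cs => (~~ nilp cs) && all (@no_empty_node n) cs
  end.

Definition is_hc_tree n (t : hctree n) : bool :=
  no_empty_node t && perm_eq (leaves t) (enum 'I_n).

(* |T_ij| : number of leaves of the subtree rooted at the lowest common
   ancestor of i and j (for i, j leaves of t) *)
Fixpoint lca_size n (t : hctree n) (i j : 'I_n) : nat :=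
  match t with
  | Leaf _ => 1
  | Node cs =>
      let fix go (l : seq (hctree n)) : nat :=
        match l with
        | [::] => size (leaves t)
        | c :: l' => if (i \in leaves c) && (j \in leaves c)
                     then lca_size c i j else go l'
        end in go cs
  end.

Local Open Scope ring_scope.

Definition hcc (R : realFieldType) n (ws wd : 'I_n -> 'I_n -> R)
    (t : hctree n) : R :=
  \sum_(i < n) \sum_(j < n | (i < j)%N)
     (ws i j * (n%:R - (lca_size t i j)%:R) + wd i j * (lca_size t i j)%:R).

(* Grow a caterpillar tree: on a set s of M points, split off a single leaf v
   at the root and recurse on s minus v.  Pairs inside s minus v keep their
   subtree but the ambient size grows by one, which earns each of them its
   similarity weight once more; pairs through v get |T_ij| = M.  Comparing
   with the bound for M - 1 points, the step is admissible exactly when the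
   gain of v (a linear form in the total weights and the weights incident to
   v) is nonnegative.  Summed over v the gains equal 4/3 of the total
   dissimilarity weight, which is nonnegative, so a vertex of nonnegative gain
   always exists. *)
From mathcomp Require Import all_boot all_order all_algebra ring lra.
Import Order.TTheory GRing.Theory Num.Theory.
Set Implicit Arguments. Unset Strict Implicit.
Local Open Scope ring_scope.

Lemma exists_ge0_of_sum_ge0 (R : realDomainType) (T : eqType) (s : seq T)
    (E : T -> R) :
  s != [::] -> 0 <= \sum_(x <- s) E x -> exists2 x, x \in s & 0 <= E x.
Proof.
case: s => // x0 s0 _; set s := x0 :: s0 => sum_ge0.
have s_has : has (mem s) s by rewrite /= mem_head.
apply/hasP; apply: contraTT sum_ge0 => /hasPn E_lt0.
rewrite -ltNge big_seq; apply: (lt_le_trans (ltr_sum (G := fun=> 0) s_has _)).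
  by move=> x /E_lt0; rewrite ltNge.
by rewrite big1.
Qed.

Lemma size_filter1_uniq (T : eqType) (v : T) (s : seq T) : uniq s -> v \in s ->
  size s = (size (filter (predC1 v) s)).+1.
Proof.
move=> s_uniq sv; rewrite -rem_filter // size_rem // prednK // -has_predT.
by apply/hasP; exists v.
Qed.

Lemma count_pred2_uniq (T : eqType) (i j : T) (s : seq T) :
  uniq s -> i != j -> i \in s -> j \in s ->
  count (fun v => (i == v) || (j == v)) s = 2%N.
Proof.
move=> s_uniq neq_ij si sj.
have := count_predUI (pred1 i) (pred1 j) s.
rewrite !count_uniq_mem // si sj.
have -> : count (predI (pred1 i) (pred1 j)) s = 0%N.
  apply/eqP; rewrite -leqn0 leqNgt -has_count; apply/hasP => -[x _] /=.
  by move=> /andP[/eqP eq_xi /eqP eq_xj]; rewrite -eq_xi -eq_xj eqxx in neq_ij.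
rewrite addn0 => count_ij; rewrite -[2%N]/(true + true)%N -count_ij.
by apply: eq_count => x /=; rewrite eq_sym (eq_sym j).
Qed.

Lemma lca_size_leaf_node n (v : 'I_n) (t : hctree n) (i j : 'I_n) : i != j ->
  lca_size (Node [:: Leaf v; t]) i j =
  if (i \in leaves t) && (j \in leaves t) then lca_size t i j
  else (size (leaves t)).+1.
Proof.
move=> neq_ij /=; rewrite !inE cats0.
suff -> : (i == v) && (j == v) = false by [].
by apply/negbTE; apply: contra neq_ij => /andP[/eqP -> /eqP ->].
Qed.

Section PairSums.
Variables (R : realFieldType) (n : nat).
Implicit Types (s : seq 'I_n) (v : 'I_n) (f h : 'I_n -> 'I_n -> R).

Definition pair_sum s f :=
  \sum_(i < n) \sum_(j < n | (i < j)%N && (i \in s) && (j \in s)) f i j.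

Definition incident_sum v s f :=
  \sum_(i < n) \sum_(j < n | (i < j)%N && (i \in s) && (j \in s)
                             && ((i == v) || (j == v))) f i j.

Lemma eq_pair_sum s f h :
  (forall i j : 'I_n, (i < j)%N -> i \in s -> j \in s -> f i j = h i j) ->
  pair_sum s f = pair_sum s h.
Proof.
move=> eq_fh; apply: eq_bigr => i _; apply: eq_bigr => j /andP[/andP[]].
exact: eq_fh.
Qed.

Lemma eq_incident_sum v s f h :
  (forall i j : 'I_n, (i < j)%N -> i \in s -> j \in s -> (i == v) || (j == v) ->
     f i j = h i j) ->
  incident_sum v s f = incident_sum v s h.
Proof.
move=> eq_fh; apply: eq_bigr => i _; apply: eq_bigr => j.
by case/andP=> /andP[/andP[]]; apply: eq_fh.
Qed.

Lemma pair_sumD s f h :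
  pair_sum s (fun i j => f i j + h i j) = pair_sum s f + pair_sum s h.
Proof. by rewrite /pair_sum -big_split; apply: eq_bigr => i _; rewrite -big_split. Qed.

Lemma incident_sumZ v s c f :
  incident_sum v s (fun i j => c * f i j) = c * incident_sum v s f.
Proof. by rewrite /incident_sum mulr_sumr; apply: eq_bigr => i _; rewrite mulr_sumr. Qed.

Lemma pair_sum_ge0 s f :
  (forall i j : 'I_n, (i < j)%N -> 0 <= f i j) -> 0 <= pair_sum s f.
Proof.
move=> f_ge0; apply: sumr_ge0 => i _; apply: sumr_ge0 => j /andP[/andP[+ _] _].
exact: f_ge0.
Qed.

Lemma pair_sum_seq1 v f : pair_sum [:: v] f = 0.
Proof.
rewrite /pair_sum big1 // => i _; rewrite big1 // => j.
rewrite !inE => /andP[/andP[lt_ij /eqP eq_iv] /eqP eq_jv].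
by rewrite eq_iv eq_jv ltnn in lt_ij.
Qed.

Lemma pair_sum_filter1 v s f :
  pair_sum s f = pair_sum (filter (predC1 v) s) f + incident_sum v s f.
Proof.
rewrite /pair_sum /incident_sum -big_split; apply: eq_bigr => i _ /=.
rewrite (bigID (fun j => (i == v) || (j == v))) /= addrC; congr (_ + _).
apply: eq_bigl => j; rewrite !mem_filter /=.
by case: (i == v); case: (j == v); rewrite ?andbT ?andbF.
Qed.

Lemma sum_incident_sum s f : uniq s ->
  \sum_(v <- s) incident_sum v s f = pair_sum s f *+ 2.
Proof.
move=> s_uniq; rewrite /incident_sum /pair_sum -sumrMnl.
under eq_bigr do under eq_bigr do rewrite big_mkcondr.
rewrite exchange_big; apply: eq_bigr => i _.
rewrite -sumrMnl exchange_big; apply: eq_bigr => j /andP[/andP[lt_ij si] sj].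
by rewrite -big_mkcond big_const_seq count_pred2_uniq ?neq_ltn ?lt_ij //= addr0 mulr2n.
Qed.

Lemma pair_sum_enum f :
  pair_sum (enum 'I_n) f = \sum_(i < n) \sum_(j < n | (i < j)%N) f i j.
Proof. by apply: eq_bigr => i _; apply: eq_bigl => j; rewrite !mem_enum !andbT. Qed.

End PairSums.

Section Caterpillar.
Variables (R : realFieldType) (n : nat) (ws wd : 'I_n -> 'I_n -> R).
Hypothesis wd_ge0 : forall i j : 'I_n, (i < j)%N -> 0 <= wd i j.
Implicit Types (s : seq 'I_n) (v : 'I_n) (t : hctree n).

Definition hcc_on s t :=
  pair_sum s (fun i j => ws i j * ((size s)%:R - (lca_size t i j)%:R)
                         + wd i j * (lca_size t i j)%:R).

Definition hcc_bound s :=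
  3^-1 * ((size s)%:R - 2) * pair_sum s ws + 2 / 3 * (size s)%:R * pair_sum s wd.

Definition peel_gain s v :=
  2 / 3 * (pair_sum s ws - pair_sum s wd) - (size s)%:R / 3 * incident_sum v s ws
  + ((size s)%:R + 2) / 3 * incident_sum v s wd.

Lemma sum_peel_gain s : uniq s -> \sum_(v <- s) peel_gain s v = 4 / 3 * pair_sum s wd.
Proof.
move=> s_uniq; rewrite /peel_gain !big_split /= sumrN -!mulr_sumr.
rewrite !sum_incident_sum // big_const_seq count_predT iter_addr_0.
rewrite -(mulr_natr (pair_sum s ws - pair_sum s wd)) !mulr2n.
by move: (size s)%:R (pair_sum s ws) (pair_sum s wd) => M a b; field.
Qed.

Lemma exists_peel_gain_ge0 s : uniq s -> s != [::] ->
  exists2 v, v \in s & 0 <= peel_gain s v.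
Proof.
move=> s_uniq s_neq0; apply: exists_ge0_of_sum_ge0 => //.
by rewrite sum_peel_gain // mulr_ge0 ?divr_ge0 ?ler0n ?pair_sum_ge0.
Qed.

Lemma hcc_on_leaf_node s v t :
  uniq s -> v \in s -> perm_eq (leaves t) (filter (predC1 v) s) ->
  hcc_on s (Node [:: Leaf v; t]) =
  hcc_on (filter (predC1 v) s) t + pair_sum (filter (predC1 v) s) ws
  + (size s)%:R * incident_sum v s wd.
Proof.
set s' := filter _ s => s_uniq sv leaves_t.
have size_s : size s = (size s').+1 by exact: size_filter1_uniq.
have vNt : v \notin leaves t by rewrite (perm_mem leaves_t) mem_filter /= eqxx.
rewrite /hcc_on {1}(pair_sum_filter1 v) -/s' -pair_sumD; congr (_ + _).
  apply: eq_pair_sum => i j lt_ij s'i s'j.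
  rewrite lca_size_leaf_node ?neq_ltn ?lt_ij // !(perm_mem leaves_t) s'i s'j.
  by rewrite size_s -addn1 natrD /=; ring.
rewrite -incident_sumZ; apply: eq_incident_sum => i j lt_ij _ _ ijv.
rewrite lca_size_leaf_node ?neq_ltn ?lt_ij //.
have -> : (i \in leaves t) && (j \in leaves t) = false.
  by case/orP: ijv => /eqP ->; rewrite (negbTE vNt) ?andbF.
by rewrite (perm_size leaves_t) -size_s subrr mulr0 add0r mulrC.
Qed.

Lemma hcc_bound_filter1 s v : uniq s -> v \in s ->
  hcc_bound s + peel_gain s v =
  hcc_bound (filter (predC1 v) s) + pair_sum (filter (predC1 v) s) ws
  + (size s)%:R * incident_sum v s wd.
Proof.
set s' := filter _ s => s_uniq sv.
have size_s : (size s)%:R = (size s')%:R + 1 :> R.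
  by rewrite (size_filter1_uniq s_uniq sv) -addn1 natrD.
rewrite /hcc_bound /peel_gain (pair_sum_filter1 v s ws) (pair_sum_filter1 v s wd).
rewrite -/s' size_s; move: (size s')%:R => M.
move: (pair_sum s' ws) (pair_sum s' wd) (incident_sum v s ws) (incident_sum v s wd).
by move=> a b c d; field.
Qed.

Lemma exists_caterpillar s : uniq s -> s != [::] ->
  exists2 t, no_empty_node t && perm_eq (leaves t) s & hcc_bound s <= hcc_on s t.
Proof.
move size_s : (size s).-1 => m; elim: m s size_s => [|m IH] s.
  case: s => [|x [|y s]] //= _ _ _; exists (Leaf x); first by rewrite /= perm_refl.
  by rewrite /hcc_bound /hcc_on !pair_sum_seq1 !mulr0 addr0.
move=> size_s s_uniq s_neq0.
have [v sv gain_ge0] := exists_peel_gain_ge0 s_uniq s_neq0.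
set s' := filter (predC1 v) s.
have size_s' : size s' = (size s).-1 by rewrite (size_filter1_uniq s_uniq sv).
have s'_neq0 : s' != [::] by rewrite -size_eq0 size_s' size_s.
have [t /andP[t_ne leaves_t] IHt] : exists2 t,
    no_empty_node t && perm_eq (leaves t) s' & hcc_bound s' <= hcc_on s' t.
  by apply: IH; rewrite ?size_s' ?size_s ?filter_uniq.
exists (Node [:: Leaf v; t]).
  rewrite /= t_ne /= cats0 perm_sym (perm_trans (perm_to_rem sv)) //.
  by rewrite perm_cons rem_filter // perm_sym.
have := hcc_bound_filter1 s_uniq sv; rewrite hcc_on_leaf_node // -/s'.
lra.
Qed.

End Caterpillar.

Theorem proposition1 (R : realFieldType) (n : nat) (hn : (0 < n)%N)
    (ws wd : 'I_n -> 'I_n -> R)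
    (hws : forall i j : 'I_n, (i < j)%N -> 0 <= ws i j)
    (hwd : forall i j : 'I_n, (i < j)%N -> 0 <= wd i j) :
  exists T1 : hctree n, is_hc_tree T1 /\
    hcc ws wd T1 >=
      3^-1 * (n%:R - 2) * (\sum_(i < n) \sum_(j < n | (i < j)%N) ws i j)
      + 2 / 3 * n%:R * (\sum_(i < n) \sum_(j < n | (i < j)%N) wd i j).
Proof.
have enum_neq0 : enum 'I_n != [::] by rewrite -size_eq0 size_enum_ord -lt0n.
have [t t_hc bound] := exists_caterpillar ws hwd (enum_uniq _) enum_neq0.
exists t; split; first exact: t_hc.
by move: bound; rewrite /hcc_bound /hcc_on !pair_sum_enum size_enum_ord.
Qed.
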